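(* Let $\mathcal{D}$ be a probability distribution on $\mathcal{X}\times\mathcal{Y}$ with $\mathcal{Y}=\{1,\dots,K\}$, and let $\rho$ be a probability distribution over classifiers $h:\mathcal{X}\to\mathcal{Y}$. Let $W_\rho=W_\rho(X,Y)=\mathbb{E}_{h\sim\rho}[\mathbb{1}(h(X)\neq Y)]$ for $(X,Y)\sim\mathcal{D}$, and $\bar W_\rho=1-W_\rho$. Suppose $\rho$ is competent, i.e. for every $0\le t\le 1/2$, $$\mathbb{P}_{\mathcal{D}}\big(W_\rho\in[t,1/2)\big)\;\ge\;\mathbb{P}_{\mathcal{D}}\big(W_\rho\in[1/2,1-t]\big).$$ Then for any increasing function $h:[0,1]\to\mathbb{R}$ with $h(0)=0$, $$\mathbb{E}_{\mathcal{D}}\big[h(W_\rho)\mathbb{1}_{W_\rho<1/2}\big]\;\ge\;\mathbb{E}_{\mathcal{D}}\big[h(\bar W_\rho)\mathbb{1}_{\bar W_\rho\le 1/2}\big].$$ *)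

From HB Require Import structures.
From mathcomp Require Import all_boot all_order all_algebra.
From mathcomp Require Import all_classical all_reals all_analysis.
Set Implicit Arguments. Unset Strict Implicit. Unset Printing Implicit Defensive.
Import Order.TTheory GRing.Theory Num.Theory.
Local Open Scope classical_set_scope.
Local Open Scope ring_scope.

(* The label set Y = {1,...,K}: [label n] is 'I_n.+1, i.e. K = n+1 labels
   (represented 0..n), with the discrete sigma-algebra.  Measurable types
   must be pointed, hence the n.+1 (K = 0 is vacuous: no distribution
   exists on X x {}). *)
Definition label (n : nat) : Type := 'I_n.+1.
HB.instance Definition _ n := Finite.on (label n).
HB.instance Definition _ n := isPointed.Build (label n) ord0.
HB.instance Definition _ K := @isMeasurable.Build default_measure_display
  (label K) discrete_measurable discrete_measurable0
  discrete_measurableC discrete_measurableU.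

Definition Wrho (R : realType) (dH d : measure_display) (H : measurableType dH)
  (X : measurableType d) (K : nat) (rho : probability H R)
  (ev : H -> X -> label K) (z : X * label K) : R :=
  fine (\int[rho]_h (\1_[set h' | ev h' z.1 != z.2] h)%:E).

From HB Require Import structures.
From mathcomp Require Import all_boot all_order all_algebra.
From mathcomp Require Import all_classical all_reals all_analysis.
From mathcomp Require Import measurable_realfun lra.
Set Implicit Arguments.
Unset Strict Implicit.
Unset Printing Implicit Defensive.
Import Order.TTheory GRing.Theory Num.Theory.
Local Open Scope classical_set_scope.
Local Open Scope ring_scope.

(* By the layer-cake formula E[f] = \int_0^oo P(f > s) ds it suffices to compare
   the tails of the two integrands.  For s >= 0, monotonicity of g makes
   S = {x >= 0 | s < g x} meet (-oo, 1/2] in [a, 1/2] or in ]a, 1/2], so the two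
   tail events are {1/2 <= W <= 1 - a} and {a <= W < 1/2}, or the same events
   with strict inequalities at a.  The closed case is competence at t = a; the
   open case follows from competence at t = a + 1/(k+1) by continuity of the
   probability along the increasing union over k. *)

Lemma nondecreasing_itv_measurable (R : realType) (a b : R) (g : R -> R) :
  a <= b -> {in `[a, b] &, {homo g : x y / x <= y}} ->
  measurable_fun `[a, b] g.
Proof.
move=> ab g_nd.
pose c x := Num.max a (Num.min x b).
have c_itv x : c x \in `[a, b].
  by rewrite in_itv /= le_max lexx ge_max ab ge_min lexx orbT.
have cE : {in `[a, b], c =1 id}.
  by move=> x; rewrite in_itv /= => /andP[ax xb]; rewrite /c min_l // max_r.
apply: (eq_measurable_fun (g \o c)) => [x /set_mem xab /=|]; first by rewrite cE.
apply: nondecreasing_measurable => // x y xy.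
by apply: g_nd; rewrite ?c_itv // le_max2 // le_min2.
Qed.

Lemma measurable_preimage_itv (R : realType) d (T : measurableType d)
  (f : T -> R) (mf : measurable_fun setT f) (i : interval R) :
  measurable [set x | f x \in i].
Proof. by have := mf measurableT _ (measurable_itv i); rewrite setTI. Qed.

Section tail_comparison.
Local Open Scope ereal_scope.
Context d (T : measurableType d) (R : realType) (P : probability T R).

Lemma ge0_le_integral_tail (f1 f2 : T -> R) :
  measurable_fun setT f1 -> measurable_fun setT f2 ->
  (forall x, 0 <= f1 x)%R -> (forall x, 0 <= f2 x)%R ->
  (forall s : R, (0 <= s)%R ->
     P [set x | (s < f1 x)%R] <= P [set x | (s < f2 x)%R]) ->
  \int[P]_x (f1 x)%:E <= \int[P]_x (f2 x)%:E.
Proof.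
move=> /mem_set mf1 /mem_set mf2 f1_ge0 f2_ge0 tail12.
pose X1 : {RV P >-> R} := mfun_Sub mf1.
pose X2 : {RV P >-> R} := mfun_Sub mf2.
rewrite -[f1]/(X1 : T -> R) -[f2]/(X2 : T -> R) -!expectation_def.
rewrite !ge0_expectation_ccdf //; apply: ge0_le_integral => //.
(* [ccdf_measurable] lives on the canonical measurable type of R, whose display
   differs from that of the domain of [lebesgue_measure]. *)
1,2: move=> _ Y mY; apply: measurableI => //; rewrite -[X in measurable X]setTI.
1,2: exact: ccdf_measurable.
move=> r; rewrite /= in_itv /= andbT => r_ge0.
by rewrite /ccdf /distribution /pushforward /= set_itvoy; exact: tail12.
Qed.

End tail_comparison.

Lemma ltr_mulr_bool (R : realDomainType) (s x : R) (b : bool) : 0 <= s ->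
  (s < x * b%:R) = b && (s < x).
Proof. by case: b => s_ge0; rewrite ?mulr1 ?mulr0 // ltNge s_ge0. Qed.

Lemma upward_closed_itv (R : realType) (S : set R) (b : R) : 0 <= b ->
  S `<=` [set x | 0 <= x] -> (forall x y, S x -> x <= y <= b -> S y) ->
  exists a c, 0 <= a /\ forall x, x <= b -> S x <-> (a < x ?<= if c).
Proof.
move=> b_ge0 S_ge0 S_up.
have [[x0 Sx0]|S0] := pselect (exists x, S x); last first.
  exists b, false; split=> // x xb; split=> [Sx|]; last by rewrite lteifF; lra.
  by case: S0; exists x.
have S_lb : lbound S 0 by move=> x /S_ge0.
have S_inf : has_inf S by split; [exists x0 | exists 0].
have inf_le x : S x -> inf S <= x by apply: ge_inf; exists 0.
have gt_inf x : inf S < x -> x <= b -> S x.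
  move=> ax xb; have [|y Sy] := @inf_adherent _ S (x - inf S) _ S_inf.
    by rewrite subr_gt0.
  by rewrite addrC subrK => /ltW yx; apply: (S_up y) => //; rewrite yx xb.
exists (inf S), `[< S (inf S) >]; split.
  by apply: lb_le_inf => //; exists x0.
move=> x xb; case: asboolP => [Sa|Sa]; rewrite ?lteifT ?lteifF.
- by split=> [/inf_le|ax] //; apply: (S_up _ _ Sa); rewrite ax xb.
- split=> [Sx|ax]; last exact: gt_inf.
  by rewrite lt_neqAle inf_le // andbT; apply: contra_notN Sa => /eqP ->.
Qed.

Section competence.
Local Open Scope ereal_scope.
Context d (T : measurableType d) (R : realType) (P : probability T R)
  (w : T -> R) (mw : measurable_fun setT w).
Hypothesis competent : forall t : R, (0 <= t)%R -> (t <= 1/2)%R ->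
  P [set z | (1/2 <= w z <= 1 - t)%R] <= P [set z | (t <= w z < 1/2)%R].

Lemma competent_ge0 (t : R) : (0 <= t)%R ->
  P [set z | (1/2 <= w z <= 1 - t)%R] <= P [set z | (t <= w z < 1/2)%R].
Proof.
move=> t_ge0; have [t_le|t_gt] := leP t (1/2)%R; first exact: competent.
rewrite (_ : [set z | _] = set0) ?measure0 ?measure_ge0 //.
by apply/seteqP; split => z //= /andP[]; lra.
Qed.

Lemma competent_open (a : R) : (0 <= a)%R ->
  P [set z | (1/2 <= w z < 1 - a)%R] <= P [set z | (a < w z < 1/2)%R].
Proof.
move=> a_ge0; pose t (k : nat) := (a + k.+1%:R^-1)%R.
have a_lt_t k : (a < t k)%R by rewrite ltrDl invr_gt0.
pose L k := [set z | (1/2 <= w z <= 1 - t k)%R].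
have mL k : measurable (L k).
  exact: measurable_preimage_itv mw `[1/2, 1 - t k]%R.
have L_nd : nondecreasing_seq L.
  move=> k m km; apply/subsetPset => z /andP[z_ge z_le]; apply/andP; split=> //.
  apply: le_trans z_le _; rewrite lerD2l lerN2 lerD2l lef_pV2 ?posrE //.
  by rewrite ler_nat ltnS.
have -> : [set z | (1/2 <= w z < 1 - a)%R] = \bigcup_k L k.
  apply/seteqP; split => [z /andP[z_ge z_lt]|z [k _ /andP[z_ge z_le]]] /=.
    have [|k k_lt] := @ltr_add_invr _ a (1 - w z)%R; first lra.
    exists k => //; apply/andP; split => //.
    by rewrite /t; set e := (k.+1%:R^-1)%R in k_lt *; lra.
  by apply/andP; split => //; move: (a_lt_t k) z_le; lra.
have := nondecreasing_cvg_mu (mu := P) mL (bigcupT_measurable L mL) L_nd.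
move/cvge_to_le; apply; apply: nearW => k /=.
apply: le_trans (competent_ge0 (ltW (le_lt_trans a_ge0 (a_lt_t k)))) _.
apply: le_measure; rewrite ?inE.
- exact: measurable_preimage_itv mw `[t k, 1/2[%R.
- exact: measurable_preimage_itv mw `]a, 1/2[%R.
move=> z /andP[z_ge z_lt]; apply/andP; split=> //.
exact: lt_le_trans (a_lt_t k) z_ge.
Qed.

Lemma competent_lteif (a : R) (c : bool) : (0 <= a)%R ->
  P [set z | (1/2 <= w z)%R && (w z < 1 - a ?<= if c)%R] <=
  P [set z | (a < w z ?<= if c)%R && (w z < 1/2)%R].
Proof. by case: c; [exact: competent_ge0 | exact: competent_open]. Qed.

Lemma competent_upward_closed (S : set R) : S `<=` [set x | (0 <= x)%R] ->
  (forall x y, S x -> (x <= y <= 1/2)%R -> S y) ->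
  P [set z | (1/2 <= w z)%R /\ S (1 - w z)%R] <=
  P [set z | (w z < 1/2)%R /\ S (w z)].
Proof.
move=> S_ge0 S_up; have half_ge0 : (0 <= 1/2 :> R)%R by lra.
have [a [c [a_ge0 SE]]] := upward_closed_itv half_ge0 S_ge0 S_up.
rewrite (_ : [set z | _ /\ S (1 - w z)%R] =
             [set z | (1/2 <= w z)%R && (w z < 1 - a ?<= if c)%R]).
  rewrite (_ : [set z | _ /\ S (w z)] =
               [set z | (a < w z ?<= if c)%R && (w z < 1/2)%R]).
    exact: competent_lteif.
  apply/seteqP; split => z /= [].
    by move=> z_lt /(SE _ (ltW z_lt)) ->.
  by move=> /andP[a_z z_lt]; split=> //; apply/(SE _ (ltW z_lt)).
have SE' z : (1/2 <= w z)%R -> S (1 - w z)%R <-> (w z < 1 - a ?<= if c)%R.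
  by move=> z_ge; rewrite lteifBrDl [(a + _)%R]addrC -lteifBrDl; apply: SE; lra.
apply/seteqP; split => z /=.
  by move=> [z_ge /(SE' z z_ge) ->]; rewrite z_ge.
by move=> /andP[z_ge /(SE' z z_ge)].
Qed.

Lemma competent_le_integral (g : R -> R) :
  (forall z, (w z \in `[0, 1])%R) ->
  {in `[0, 1]%R &, {homo g : x y / (x <= y)%R}} -> g 0%R = 0%R ->
  \int[P]_z (g (1 - w z) * ((1 - w z <= 1/2)%R)%:R)%R%:E <=
  \int[P]_z (g (w z) * ((w z < 1/2)%R)%:R)%R%:E.
Proof.
move=> w01 g_nd g0.
have w_ge0 z : (0 <= w z)%R by have := w01 z; rewrite in_itv => /andP[].
have w_le1 z : (w z <= 1)%R by have := w01 z; rewrite in_itv => /andP[].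
have w1_01 z : (1 - w z \in `[0, 1])%R.
  by rewrite in_itv /=; move: (w_ge0 z) (w_le1 z); lra.
have mg := nondecreasing_itv_measurable ler01 g_nd.
have mgu (u : T -> R) :
    measurable_fun setT u -> (forall z, (u z \in `[0, 1])%R) ->
    measurable_fun setT (g \o u).
  move=> mu u01; apply: measurable_comp mg mu; first exact: measurable_itv.
  by move=> _ [z _ <-]; exact: u01.
have g_ge0 x : (x \in `[0, 1])%R -> (0 <= g x)%R.
  move=> x01; rewrite -g0; apply: g_nd => //.
    by rewrite in_itv /= lexx ler01.
  by move: x01; rewrite in_itv => /andP[].
apply: ge0_le_integral_tail.
- apply: measurable_funM; first by apply: mgu => //; exact: measurable_funB.
  apply: measurableT_comp => //; apply: measurable_fun_ler => //.
  exact: measurable_funB.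
- apply: measurable_funM; first exact: mgu.
  by apply: measurableT_comp => //; exact: measurable_fun_ltr.
- by move=> z; rewrite mulr_ge0 ?g_ge0.
- by move=> z; rewrite mulr_ge0 ?g_ge0.
move=> s s_ge0; pose S := [set x : R | (0 <= x)%R /\ (s < g x)%R].
have S_up x y : S x -> (x <= y <= 1/2)%R -> S y.
  move=> [x_ge0 sx] /andP[xy y_le]; split; first exact: le_trans xy.
  by apply: lt_le_trans sx _; apply: g_nd; rewrite // in_itv /=; apply/andP; lra.
have S_ge0 : S `<=` [set x | (0 <= x)%R] by move=> x [].
rewrite (_ : [set z | _ < g (1 - w z) * _]%R =
             [set z | 1/2 <= w z /\ S (1 - w z)]%R).
  rewrite (_ : [set z | _ < g (w z) * _]%R = [set z | w z < 1/2 /\ S (w z)]%R).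
    by apply: competent_upward_closed S_ge0 S_up.
  apply/seteqP; split => z; rewrite /= ltr_mulr_bool //.
    by move=> /andP[z_lt sz]; do !split.
  by move=> [-> [_ ->]].
apply/seteqP; split => z; rewrite /= ltr_mulr_bool //.
  by move=> /andP[z_le sz]; do !split => //; move: (w_le1 z); lra.
by move=> [z_ge [_ ->]]; rewrite andbT; lra.
Qed.
End competence.

Section misclassification_rate.
Context (R : realType) (d dH : measure_display) (X : measurableType d) (n : nat)
  (H : measurableType dH) (rho : probability H R) (ev : H -> X -> label n).
Hypothesis ev_meas :
  measurable [set p : H * (X * label n) | ev p.1 p.2.1 != p.2.2].

Let E := [set p : H * (X * label n) | ev p.1 p.2.1 != p.2.2].

Lemma ysection_misclassified z : ysection E z = [set h | ev h z.1 != z.2].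
Proof. by rewrite ysectionE. Qed.

Lemma measurable_misclassified z : measurable [set h | ev h z.1 != z.2].
Proof. by rewrite -ysection_misclassified; exact: measurable_ysection. Qed.

Lemma WrhoE z : (Wrho rho ev z)%:E = rho (ysection E z).
Proof.
have mz := measurable_misclassified z.
rewrite ysection_misclassified /Wrho integral_indic ?setIT //.
by rewrite fineK ?fin_num_measure.
Qed.

Lemma Wrho_itv z : Wrho rho ev z \in `[0, 1].
Proof.
rewrite in_itv /= -!lee_fin WrhoE measure_ge0 probability_le1 //.
exact: measurable_ysection.
Qed.

Lemma measurable_Wrho : measurable_fun setT (Wrho rho ev).
Proof.
apply/measurable_EFinP; rewrite (_ : _ \o _ = rho \o ysection E).
  exact: measurable_fun_ysection.
by apply/funext => z /=; rewrite WrhoE.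
Qed.

End misclassification_rate.

Theorem lemma2 (R : realType) (d dH : measure_display)
  (X : measurableType d) (n : nat) (H : measurableType dH)
  (D : probability (X * label n)%type R) (rho : probability H R)
  (ev : H -> X -> label n)
  (ev_meas : measurable [set p : H * (X * label n) | ev p.1 p.2.1 != p.2.2])
  (competent : forall t : R, 0 <= t -> t <= 1/2 ->
     (D [set z | (1/2 <= Wrho rho ev z <= 1 - t)%R]
       <= D [set z | (t <= Wrho rho ev z < 1/2)%R])%E)
  (g : R -> R)
  (g_incr : forall x y : R, 0 <= x -> x <= y -> y <= 1 -> g x <= g y)
  (g0 : g 0 = 0) :
  (\int[D]_z (g (1 - Wrho rho ev z) * ((1 - Wrho rho ev z <= 1/2)%R)%:R)%R%:E
   <= \int[D]_z (g (Wrho rho ev z) * ((Wrho rho ev z < 1/2)%R)%:R)%R%:E)%E.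
Proof.
apply: (competent_le_integral (measurable_Wrho rho ev_meas) competent) => //.
- exact: (Wrho_itv rho ev_meas).
- move=> x y; rewrite !in_itv /= => /andP[x_ge0 _] /andP[_ y_le1] xy.
  exact: g_incr x y x_ge0 xy y_le1.
Qed.
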